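(* For every integer $d\ge 2$ there is a constant $C_d>0$ such that for every positive integer $N$, \[ \mathfrak{C}_d(N) \geq \left(2 + \frac{2}{d+1} - \frac{C_d}{N}\right)(2N+1)^{d^2 + 1}. \]
   Context: For positive integers $d,N$, let $\mathrm{Mat}_d(\mathbb{Z},N)$ denote the set of $d\times d$ matrices with all entries in $[-N,N]\cap\mathbb{Z}$, and let $\mathfrak{C}_d(N)$ be the number of pairs $(A,B)\in \mathrm{Mat}_d(\mathbb{Z},N)^2$ with $AB=BA$. *)

From mathcomp Require Import all_boot all_order all_algebra.
Set Implicit Arguments. Unset Strict Implicit. Unset Printing Implicit Defensive.
Import Order.TTheory GRing.Theory Num.Theory.
Local Open Scope ring_scope.

(* An element k of 'I_(2N+1) encodes the integer k - N in [-N, N]. *)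
Definition shift_int (N : nat) (k : 'I_(2 * N + 1)) : int := (k%:Z - N%:Z).

Definition to_intmx (d N : nat) (A : 'M['I_(2 * N + 1)]_d) : 'M[int]_d :=
  \matrix_(i, j) shift_int (A i j).

Definition in_Mat (d N : nat) (A : 'M[int]_d) : bool :=
  [forall i, forall j, `|A i j| <= N%:Z].

(* frak C_d(N) = #{(A,B) in Mat_d(Z,N)^2 | AB = BA}, counted via the
   bijective encoding 'M['I_(2N+1)]_d <-> Mat_d(Z,N). *)
Definition commuting_count (d N : nat) : nat :=
  #|[set p : 'M['I_(2 * N + 1)]_d * 'M['I_(2 * N + 1)]_d |
      to_intmx p.1 *m to_intmx p.2 == to_intmx p.2 *m to_intmx p.1]|.

From mathcomp Require Import all_boot all_order all_algebra.
From mathcomp Require Import zify ring lra.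
Set Implicit Arguments. Unset Strict Implicit. Unset Printing Implicit Defensive.
Import Order.TTheory GRing.Theory Num.Theory.
Local Open Scope ring_scope.

(* A pair (A, B) commutes as soon as A, B or B - A is a scalar matrix, and any two of
   these three conditions imply the third.  Writing M = 2N + 1, inclusion-exclusion gives
     C_d(N) >= 2 M^(d^2+1) - 2 M^2 + #{(A, B) : B - A scalar}.
   The pairs B = A + cI with c >= 0 are counted by c: the diagonal of A must lie in
   [-N, N - c], so there are sum_(c < M) (M - c)^d M^(d^2-d) >= M^(d^2+1) / (d + 1) of
   them; the pairs with B - A scalar are twice as many, minus the M^(d^2) pairs A = B. *)

Lemma cardsU3_two_of_three (T : finType) (A B C : {set T}) :
    A :&: B \subset C -> B :&: C \subset A -> C :&: A \subset B ->
  (#|A| + #|B| + #|C| = #|A :|: B :|: C| + 2 * #|A :&: B|)%N.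
Proof.
move=> /subsetP sABC /subsetP sBCA /subsetP sCAB.
have capUC : (A :|: B) :&: C = A :&: B.
  apply/setP => x; move: (sABC x) (sBCA x) (sCAB x); rewrite !inE.
  move=> /implyP + /implyP + /implyP +.
  by case: (x \in A) (x \in B) (x \in C) => [] [] [].
have := cardsUI (A :|: B) C; have := cardsUI A B; rewrite capUC; lia.
Qed.

Lemma card_pairs_dep (I J : finType) (F : I -> {set J}) :
  #|[set p : I * J | p.2 \in F p.1]| = (\sum_i #|F i|)%N.
Proof.
transitivity (\sum_i \sum_(j in F i) 1)%N; first by rewrite pair_big_dep sum1dep_card.
by apply: eq_bigr => i _; rewrite sum1_card.
Qed.

Lemma card_ord_lt m k : (k <= m)%N -> #|[pred i : 'I_m | (i < k)%N]| = k.
Proof.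
move=> le_km; rewrite -sum1_card (eq_bigl (fun i : 'I_m => (i < k)%N)) //.
by rewrite -(big_ord_widen _ (fun=> 1%N) le_km) sum_nat_const card_ord muln1.
Qed.

Lemma card_mx_diag_pred (T : finType) (P : pred T) n :
  #|[set A : 'M[T]_n | [forall i, P (A i i)]]| = (#|P| ^ n * #|T| ^ (n * n.-1))%N.
Proof.
pose F (ij : 'I_n * 'I_n) : pred T := if ij.1 == ij.2 then P else predT.
have -> : [set A : 'M[T]_n | [forall i, P (A i i)]] =
          [set Matrix f | f in (family F : pred {ffun 'I_n * 'I_n -> T})].
  apply/setP => A; rewrite inE; apply/forallP/imsetP => [PA | [f /familyP Ff ->] i].
    case: A PA => f PA; exists f => //; apply/familyP => -[i j].
    by rewrite /F /=; case: eqP => [<-|//]; apply: PA.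
  by have := Ff (i, i); rewrite /F /= eqxx.
rewrite card_imset; last by move=> f g [].
rewrite card_family foldrE big_map big_enum /=.
transitivity (\prod_i \prod_j #|F (i, j)|)%N; first by rewrite pair_big; apply: eq_bigr => -[].
rewrite (eq_bigr (fun=> #|P| * #|T| ^ n.-1)%N) => [|i _].
  by rewrite prod_nat_const card_ord expnMn -expnM (mulnC n.-1).
rewrite (bigD1 i) //= /F eqxx (eq_bigr (fun=> #|T|)) => [|j /negbTE ji]; last first.
  by rewrite /= eq_sym ji.
by rewrite prod_nat_const (cardC1 i) card_ord.
Qed.

Lemma subn_expS_le n d : (n.+1 ^ d.+1 - n ^ d.+1 <= d.+1 * n.+1 ^ d)%N.
Proof.
rewrite subn_exp subSnn mul1n.
apply: (@leq_trans (\sum_(i < d.+1) n.+1 ^ d)); last by rewrite sum_nat_const card_ord.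
apply: leq_sum => i _ /=; rewrite -[in X in (_ <= X)%N](subnK (ltnSE (ltn_ord i))) expnD.
rewrite leq_mul2l; apply/orP; right.
by case: (nat_of_ord i) => [|k] //; rewrite leq_exp2r.
Qed.

Lemma expnS_le_sum_pow n d : (n ^ d.+1 <= d.+1 * \sum_(k < n) k.+1 ^ d)%N.
Proof.
elim: n => [|n IH]; first by rewrite exp0n.
rewrite big_ord_recr /= mulnDr.
have := subn_expS_le n d; rewrite leq_subLR => /leq_trans; apply.
by rewrite leq_add2r.
Qed.

Lemma is_scalar_mxD (V : nmodType) n (A B : 'M[V]_n) :
  is_scalar_mx A -> is_scalar_mx B -> is_scalar_mx (A + B).
Proof.
by move=> /is_scalar_mxP[a ->] /is_scalar_mxP[b ->]; rewrite -raddfD scalar_mx_is_scalar.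
Qed.

Lemma is_scalar_mxN (V : zmodType) n (A : 'M[V]_n) : is_scalar_mx (- A) = is_scalar_mx A.
Proof.
suff imp (B : 'M[V]_n) : is_scalar_mx B -> is_scalar_mx (- B).
  by apply/idP/idP => /imp; rewrite ?opprK.
by move=> /is_scalar_mxP[b ->]; rewrite -raddfN scalar_mx_is_scalar.
Qed.

Lemma comm_mx_scalar_or (R : comPzRingType) n (A B : 'M[R]_n) :
  [|| is_scalar_mx A, is_scalar_mx B | is_scalar_mx (B - A)] -> comm_mx A B.
Proof.
case/or3P => /is_scalar_mxP[a def_a].
- by rewrite def_a; apply/comm_mx_sym/comm_mx_scalar.
- by rewrite def_a; apply: comm_mx_scalar.
- by rewrite -(subrK A B) def_a; apply: comm_mxD; [apply: comm_mx_scalar | apply: comm_mx_refl].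
Qed.

Section BoxEncoding.

Variables N n : nat.
Local Notation M := (2 * N + 1)%N.
Local Notation code := 'M['I_(2 * N + 1)]_n.+1.

Lemma shift_int_inj : injective (@shift_int N).
Proof. by move=> a b /(congr1 (fun z => z + N%:Z)); rewrite !subrK => -[] /val_inj. Qed.

Lemma to_intmx_inj : injective (@to_intmx n.+1 N).
Proof.
move=> A B /matrixP eqAB; apply/matrixP => i j.
by have := eqAB i j; rewrite !mxE => /shift_int_inj.
Qed.

Lemma zero_code_subproof : (N < M)%N. Proof. lia. Qed.
Definition zero_code : 'I_M := Ordinal zero_code_subproof.

Definition scalar_code (a : 'I_M) : code :=
  \matrix_(i, j) if i == j then a else zero_code.

Lemma to_intmx_scalar_code a : to_intmx (scalar_code a) = (shift_int a)%:M.
Proof.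
apply/matrixP => i j; rewrite !mxE; case: eqP => _ //=.
by rewrite /shift_int subrr.
Qed.

Definition scalar_codes := [set A : code | is_scalar_mx (to_intmx A)].

Lemma card_scalar_codes : #|scalar_codes| = M.
Proof.
have -> : scalar_codes = scalar_code @: 'I_M.
  apply/setP => A; rewrite inE; apply/idP/imsetP => [/is_scalar_mxP[k defA] | [a _ ->]].
    exists (A ord0 ord0) => //; apply: to_intmx_inj.
    rewrite to_intmx_scalar_code defA; congr _%:M.
    by have /matrixP/(_ ord0 ord0) := defA; rewrite !mxE eqxx mulr1n => <-.
  by rewrite to_intmx_scalar_code scalar_mx_is_scalar.
rewrite card_imset ?card_ord // => a b /matrixP/(_ ord0 ord0).
by rewrite !mxE eqxx.
Qed.

(* [insubd] keeps the entry unchanged when [A i i + c] leaves the box, so [diag_shift c A]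
   only means A + cI under the hypothesis of [to_intmx_diag_shift]. *)
Definition diag_shift (c : nat) (A : code) : code :=
  \matrix_(i, j) if i == j then insubd (A i j) (A i j + c)%N else A i j.

Lemma to_intmx_diag_shift (c : nat) (A : code) : (forall i, A i i < M - c)%N ->
  to_intmx (diag_shift c A) = to_intmx A + (c%:Z)%:M.
Proof.
move=> Ac; apply/matrixP => i j; rewrite !mxE; case: eqP => [<-|_] /=; last by rewrite addr0.
have := Ac i; rewrite ltn_subRL addnC => Aic.
by rewrite /shift_int val_insubd Aic PoszD mulr1n addrAC.
Qed.

Local Notation mxdiff p := (to_intmx p.2 - to_intmx p.1).

Definition scalar_diff_pairs := [set p : code * code | is_scalar_mx (mxdiff p)].

Definition upshift_pairs :=
  [set p : code * code | is_scalar_mx (mxdiff p) && (0 <= mxdiff p ord0 ord0)].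

Lemma commuting_count_ge :
  (2 * M * #|{: code}| + #|scalar_diff_pairs| <= commuting_count n.+1 N + 2 * M ^ 2)%N.
Proof.
pose L := [set p : code * code | p.1 \in scalar_codes].
pose R := [set p : code * code | p.2 \in scalar_codes].
have cardL : #|L| = (M * #|{: code}|)%N.
  have := cardsX scalar_codes [set: code]; rewrite card_scalar_codes cardsT => <-.
  by apply: eq_card => p; rewrite !inE andbT.
have cardR : #|R| = (M * #|{: code}|)%N.
  have := cardsX [set: code] scalar_codes; rewrite card_scalar_codes cardsT [(_ * M)%N]mulnC => <-.
  by apply: eq_card => p; rewrite !inE.
have cardLR : #|L :&: R| = (M ^ 2)%N.
  have := cardsX scalar_codes scalar_codes; rewrite card_scalar_codes mulnn => <-.
  by apply: eq_card => p; rewrite !inE.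
have LR_diff : L :&: R \subset scalar_diff_pairs.
  apply/subsetP => p; rewrite !inE => /andP[S1 S2].
  by rewrite is_scalar_mxD ?is_scalar_mxN.
have R_diff_L : R :&: scalar_diff_pairs \subset L.
  apply/subsetP => p; rewrite !inE => /andP[S2 Sd].
  by rewrite -[to_intmx p.1](subKr (to_intmx p.2)) is_scalar_mxD ?is_scalar_mxN.
have diff_L_R : scalar_diff_pairs :&: L \subset R.
  apply/subsetP => p; rewrite !inE => /andP[Sd S1].
  by rewrite -(subrK (to_intmx p.1) (to_intmx p.2)) is_scalar_mxD.
have LRD_comm : (#|L :|: R :|: scalar_diff_pairs| <= commuting_count n.+1 N)%N.
  apply/subset_leq_card/subsetP => p; rewrite !inE -!orbA => Sp.
  exact/eqP/comm_mx_scalar_or.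
have := cardsU3_two_of_three LR_diff R_diff_L diff_L_R.
rewrite cardL cardR cardLR; lia.
Qed.

Lemma card_scalar_diff_pairs :
  (#|scalar_diff_pairs| + #|{: code}| = 2 * #|upshift_pairs|)%N.
Proof.
pose swap (p : code * code) := (p.2, p.1).
have swapK : involutive swap by case.
have diff_swap p : mxdiff (swap p) = - mxdiff p by rewrite opprB.
set U := upshift_pairs.
have cupE : U :|: swap @^-1: U = scalar_diff_pairs.
  apply/setP => p; rewrite !inE diff_swap is_scalar_mxN -andb_orr.
  case: is_scalar_mxP => [[a ->]|//].
  by rewrite !mxE eqxx mulr1n oppr_ge0 le_total.
have capE : U :&: swap @^-1: U = [set p | p.1 == p.2].
  apply/setP => p; rewrite !inE diff_swap is_scalar_mxN andbACA andbb.
  apply/idP/eqP => [/andP[/is_scalar_mxP[a diff_a]] | ->]; last first.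
    by rewrite subrr mx0_is_scalar !mxE oppr0 lexx.
  rewrite diff_a !mxE eqxx mulr1n oppr_ge0 -eq_le => /eqP a0.
  by move: diff_a; rewrite -a0 raddf0 => /eqP; rewrite subr_eq0 => /eqP /to_intmx_inj.
have card_diag : #|[set p : code * code | p.1 == p.2]| = #|{: code}|.
  rewrite -[RHS](card_imset _ (fun A B (eqAB : (A, A) = (B, B)) => congr1 fst eqAB)).
  apply: eq_card => -[A B]; rewrite !inE /=; apply/eqP/imsetP => [<- | [C _ [-> ->]]] //.
  by exists A.
have := cardsUI U (swap @^-1: U).
by rewrite cupE capE card_diag card_preimset ?addnn -?mul2n //; apply: inv_inj.
Qed.

Lemma card_upshift_pairs_ge : (M ^ (n.+1 ^ 2 + 1) <= n.+2 * #|upshift_pairs|)%N.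
Proof.
pose fits (c : 'I_M) := [set A : code | [forall i, A i i < M - c]%N].
pose shiftable := [set q : 'I_M * code | q.2 \in fits q.1].
have card_fits c : #|fits c| = ((M - c) ^ n.+1 * M ^ (n.+1 * n))%N.
  by rewrite (card_mx_diag_pred [pred x : 'I_M | x < M - c]%N) card_ord_lt ?leq_subr // card_ord.
have card_shiftable : #|shiftable| = (M ^ (n.+1 * n) * \sum_(k < M) k.+1 ^ n.+1)%N.
  rewrite card_pairs_dep big_distrr /= (reindex_inj rev_ord_inj) /=.
  by apply: eq_bigr => c _; rewrite card_fits subKn // mulnC.
have shiftable_le : (#|shiftable| <= #|upshift_pairs|)%N.
  rewrite -(@card_in_imset _ _ (fun q : 'I_M * code => (q.2, diag_shift q.1 q.2))).
    apply/subset_leq_card/subsetP => _ /imsetP[[c A] fitsA ->].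
    move: fitsA; rewrite !inE /= => /forallP/to_intmx_diag_shift ->.
    by rewrite addrC addKr scalar_mx_is_scalar mxE eqxx mulr1n.
  move=> [c A] [c' A']; rewrite !inE /= => /forallP fitsA /forallP fitsA' [eqAA'].
  subst A'; move/(congr1 (@to_intmx n.+1 N)); rewrite !to_intmx_diag_shift //.
  by move=> /addrI/matrixP/(_ ord0 ord0); rewrite !mxE eqxx !mulr1n => -[/val_inj ->].
have -> : (n.+1 ^ 2 + 1 = n.+1 * n + n.+2)%N by lia.
rewrite expnD; apply: (leq_trans (leq_mul (leqnn _) (expnS_le_sum_pow M n.+1))).
by rewrite mulnCA -card_shiftable leq_mul2l shiftable_le orbT.
Qed.

Lemma commuting_count_lower_bound :
  (2 + 2 / n.+2%:R) * (M ^ (n.+1 ^ 2 + 1))%N%:R - (2 * M ^ 2 + M ^ (n.+1 ^ 2))%N%:R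
    <= (commuting_count n.+1 N)%:R :> rat.
Proof.
have := card_upshift_pairs_ge; have := card_scalar_diff_pairs; have := commuting_count_ge.
rewrite card_mx card_ord mulnn expnD expn1.
set K := (M ^ (n.+1 ^ 2))%N; set U := #|upshift_pairs|; set C := commuting_count n.+1 N.
move=> comm_ge diff_eq up_ge.
have up_r : 2 / n.+2%:R * (K * M)%N%:R <= 2 * U%:R :> rat.
  by rewrite -mulrA ler_pM2l // ler_pdivrMl ?ltr0n // -natrM ler_nat.
have : (2 * (K * M) + 2 * U)%N%:R <= (C + (2 * M ^ 2 + K))%N%:R :> rat.
  by rewrite ler_nat; lia.
rewrite natrM in up_r; rewrite !natrD !natrM mulrDl.
set X := K%:R * M%:R in up_r *; set aX := 2 / n.+2%:R * X in up_r *.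
lra.
Qed.

End BoxEncoding.

Lemma lower_order_terms_le (N e : nat) : (0 < N)%N -> (2 <= e)%N ->
  (2 * (2 * N + 1) ^ 2 + (2 * N + 1) ^ e)%N%:R
    <= 2 / N%:R * ((2 * N + 1) ^ (e + 1))%N%:R :> rat.
Proof.
move=> N_gt0 e_ge2; set M := (2 * N + 1)%N.
have sq_le : (M ^ 2 <= M ^ e)%N by apply: leq_pexp2l; rewrite // /M addn1.
rewrite expnD expn1 !natrD !natrM.
have -> : 2 / N%:R * ((M ^ e)%:R * M%:R) = (M ^ e)%:R * 4 + (M ^ e)%:R * (2 / N%:R) :> rat.
  by rewrite /M natrD natrM; field; rewrite pnatr_eq0 -lt0n.
have : 0 <= (M ^ e)%:R * (2 / N%:R) :> rat by rewrite mulr_ge0 ?divr_ge0.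
have : 0 <= (M ^ e)%:R :> rat by [].
move: sq_le; rewrite -(ler_nat rat); lra.
Qed.

Theorem lemma1p4 (d : nat) (hd : (2 <= d)%N) :
  exists C : rat, 0 < C /\
    forall N : nat, (0 < N)%N ->
      (2 + 2 / (d.+1)%:R - C / N%:R) * ((2 * N + 1)%:R) ^+ (d ^ 2 + 1)
        <= (commuting_count d N)%:R :> rat.
Proof.
case: d hd => // n n_gt0; exists 2; split => // N N_gt0.
have lower_le : (2 <= n.+1 ^ 2)%N by rewrite (leq_trans n_gt0) // leq_pmulr.
have := lower_order_terms_le N_gt0 lower_le.
have := commuting_count_lower_bound N n.
rewrite -natrX mulrBl.
set X := ((2 * N + 1) ^ (n.+1 ^ 2 + 1))%N%:R.
set aX := _ * X; set bX := 2 / N%:R * X.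
lra.
Qed.
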